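(* Let $k\ge 2$ and let $G$ be a $k$-connected graph. Let $H\subset G$ be a minimum spanning $k$-connected subgraph of $G$. Then \[ mc_k(G)\ge e(G)-e(H)+h_k(G)\ge e(G)-e(H)+1. \]
   Context: All graphs are finite, simple and undirected. A graph is $k$-connected if it has at least $k+1$ vertices and remains connected after deleting any at most $k-1$ vertices. Paths are called disjoint if they are internally vertex-disjoint. An edge-coloured path is monochromatic if all its edges have the same colour. For a $k$-connected graph $G$, an edge-colouring is monochromatic $k$-connected if any two vertices are connected by $k$ disjoint monochromatic paths; $mc_k(G)$ is the maximum number of colours in a monochromatic $k$-connected colouring of $G$. A minimum spanning $k$-connected subgraph of $G$ is a $k$-connected subgraph $H$ with $V(H)=V(G)$ and $e(H)$ minimum among such subgraphs. $h_k(G)=\max\{mc_k(H): H \text{ is a minimum spanning } k\text{-connected subgraph of } G\}$. *)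

From mathcomp Require Import all_boot.
From mathcomp Require Import boolp.
Set Implicit Arguments. Unset Strict Implicit. Unset Printing Implicit Defensive.

Definition simple_graph (T : finType) (E : {set {set T}}) : Prop :=
  forall e, e \in E -> #|e| = 2.

Definition adj (T : finType) (E : {set {set T}}) : rel T :=
  fun x y => [set x; y] \in E.

Definition nedges (T : finType) (E : {set {set T}}) : nat := #|E|.

Definition kconnected (T : finType) (k : nat) (E : {set {set T}}) : Prop :=
  k.+1 <= #|T| /\
  forall S : {set T}, #|S| <= k.-1 ->
    forall x y, x \notin S -> y \notin S ->
      connect (fun u v => [&& adj E u v, u \notin S & v \notin S]) x y.

(* p is (the vertex sequence after x of) a path from x to y in E *)
Definition is_path (T : finType) (E : {set {set T}}) (x y : T) (p : seq T) : Prop :=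
  [/\ path (adj E) x p, last x p = y & uniq (x :: p)].

Definition internal (T : finType) (x : T) (p : seq T) : seq T :=
  belast x p.

Definition monochromatic (T : finType) (c : {set T} -> nat) (x : T) (p : seq T) : Prop :=
  exists col : nat, path (fun u v => c [set u; v] == col) x p.

Definition k_mono_paths (T : finType) (k : nat) (E : {set {set T}})
    (c : {set T} -> nat) (x y : T) : Prop :=
  exists ps : seq (seq T),
    [/\ size ps = k, uniq ps,
        forall p, p \in ps -> is_path E x y p /\ monochromatic c x p &
        forall i j, i < j < size ps ->
          [disjoint behead (internal x (nth [::] ps i))
                  & behead (internal x (nth [::] ps j))]].

Definition mono_kconn_colouring (T : finType) (k : nat) (E : {set {set T}})
    (c : {set T} -> nat) : Prop :=
  forall x y : T, x != y -> k_mono_paths k E c x y.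

Definition ncolours (T : finType) (E : {set {set T}}) (c : {set T} -> nat) : nat :=
  size (undup [seq c e | e <- enum E]).

(* mc_k(G): maximum number of colours of a monochromatic k-connected
   colouring (the number of colours is at most e(G)). *)
Definition mc (T : finType) (k : nat) (E : {set {set T}}) : nat :=
  \max_(n < #|E|.+1 |
        `[< exists c : {set T} -> nat,
              mono_kconn_colouring k E c /\ ncolours E c = n >]) n.

Definition min_spanning_kconn (T : finType) (k : nat) (E F : {set {set T}}) : Prop :=
  [/\ F \subset E, kconnected k F &
      forall F' : {set {set T}}, F' \subset E -> kconnected k F' -> #|F| <= #|F'|].

Definition hk (T : finType) (k : nat) (E : {set {set T}}) : nat :=
  \max_(F : {set {set T}} | `[< min_spanning_kconn k E F >]) mc k F.

From mathcomp Require Import all_boot.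
From mathcomp Require Import boolp.
From mathcomp Require Import zify.
Set Implicit Arguments. Unset Strict Implicit. Unset Printing Implicit Defensive.

(* Take a minimum spanning k-connected subgraph F with mc_k(F) = h_k(G), colour it
   with mc_k(F) colours so that any two vertices are joined by k disjoint
   monochromatic paths of F, and give each of the e(G) - e(F) = e(G) - e(H) other
   edges a new colour of its own: the paths inside F are still there, so
   mc_k(G) >= e(G) - e(H) + h_k(G).  That h_k(G) >= 1, i.e. that a single colour
   works, is Whitney's theorem, a consequence of Menger's theorem.
   Menger's theorem for A-B separators goes by induction on the number of edges.
   If G - xy has an A-B separator Y with |Y| < k, then every A-(x + Y) and every
   (y + Y)-B separator of G - xy separates A from B in G, so by induction G - xy
   has k disjoint A-(x + Y) paths and k disjoint (y + Y)-B paths.  As x + Y and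
   y + Y have at most k vertices, each of their vertices is used, and the two
   families glue together along the edge xy. *)

Section Graphs.
Variable T : finType.
Implicit Types (E F : {set {set T}}) (S X Y A B : {set T}) (p q : seq T).

(** * Menger's theorem *)

Definition avoid E S : rel T := fun u v => [&& adj E u v, u \notin S & v \notin S].

Lemma adj_sym E : symmetric (adj E).
Proof. by move=> u v; rewrite /adj setUC. Qed.

Lemma adj_sub E F : E \subset F -> subrel (adj E) (adj F).
Proof. by move=> EF u v; apply: (subsetP EF). Qed.

Lemma simple_graph_sub E F : E \subset F -> simple_graph F -> simple_graph E.
Proof. by move=> EF sF e /(subsetP EF) /sF. Qed.

Lemma avoid_sym E S : symmetric (avoid E S).
Proof. by move=> u v; rewrite /avoid adj_sym [(u \notin S) && _]andbC. Qed.

Lemma connect_avoidC E S u v : connect (avoid E S) u v = connect (avoid E S) v u.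
Proof. exact/sym_connect_sym/avoid_sym. Qed.

Lemma connect_avoid_mem E S u v : connect (avoid E S) u v -> u \in S -> v = u.
Proof.
case/connectP=> [[|w p]] /=; first by move=> _ ->.
by case/andP=> /and3P[_ /negPf->].
Qed.

Lemma connect_avoid_notin E S u v : connect (avoid E S) u v -> u \notin S -> v \notin S.
Proof.
rewrite connect_avoidC => cvu; apply: contra => vS.
by rewrite (connect_avoid_mem cvu vS).
Qed.

Lemma all_notin_subset X Y p : {subset Y <= X} ->
  all [pred v | v \notin X] p -> all [pred v | v \notin Y] p.
Proof. by move=> YX /allP nX; apply/allP=> v /nX; apply: contra (YX v). Qed.

Lemma path_succ_all (e : rel T) (P : pred T) a p :
  (forall u v, e u v -> P v) -> path e a p -> all P p.
Proof. by move=> eP; elim: p a => //= b p IHp a /andP[/eP -> /IHp]. Qed.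

Lemma path_avoid E S u p : path (adj E) u p -> all [pred v | v \notin S] (u :: p) ->
  path (avoid E S) u p.
Proof.
move=> pp notS; apply: (sub_in_path _ notS pp) => v w; rewrite !inE => vS wS avw.
by rewrite /avoid avw vS wS.
Qed.

Lemma connect_avoid_meet E S Y a v :
  connect (avoid E S) a v -> ~~ connect (avoid E Y) a v ->
  exists2 z, z \in Y & connect (avoid E S) a z.
Proof.
case/connectP=> p pp -> {v} ncY.
have [/hasP[z zp zY] | ] := boolP (has (mem Y) (a :: p)).
  by exists z => //; apply: path_connect pp _ zp.
rewrite -all_predC => notY; case/negP: ncY; apply/connectP; exists p => //.
by apply: path_avoid notY; apply: sub_path pp => u w /and3P[].
Qed.

Lemma set2_inj (x y u v : T) :
  [set u; v] = [set x; y] -> (u = x /\ v = y) \/ (u = y /\ v = x).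
Proof.
move=> e; have: y \in [set u; v] by rewrite e set22.
have: x \in [set u; v] by rewrite e set21.
have: v \in [set x; y] by rewrite -e set22.
have: u \in [set x; y] by rewrite -e set21.
by do 4 case/set2P=> ?; subst; tauto.
Qed.

Lemma connect_avoidD1 E S x y u v : connect (avoid E S) u v ->
  let R := connect (avoid (E :\ [set x; y]) S) in
  R u v \/ (R u x /\ R y v) \/ (R u y /\ R x v).
Proof.
move=> /connectP[p + ->{v}] R; elim: p u => [|w p IHp] u /=; first by left; apply: connect0.
case/andP=> /and3P[Euw uS wS] /IHp {IHp}.
have [e|ne] := eqVneq [set u; w] [set x; y].
  have Rxx : R x x := connect0 _ x; have Ryy : R y y := connect0 _ y.
  by case: (set2_inj e) => -[eu ew]; rewrite eu ew; tauto.
have Ruw : R u w by apply: connect1; rewrite /avoid /adj in_setD1 ne uS wS /= andbT.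
case=> [Rwv|[[Rwx Ryv]|[Rwy Rxv]]].
- by left; apply: connect_trans Ruw Rwv.
- by right; left; split=> //; apply: connect_trans Ruw Rwx.
- by right; right; split=> //; apply: connect_trans Ruw Rwy.
Qed.

Definition separates E A B S : bool :=
  ~~ [exists a, exists b,
        [&& a \in A, b \in B, a \notin S, b \notin S & connect (avoid E S) a b]].

Lemma separatesP E A B S :
  reflect (forall a b, a \in A -> b \in B -> a \notin S -> b \notin S ->
             ~ connect (avoid E S) a b)
          (separates E A B S).
Proof.
apply: (iffP negP) => [nex a b aA bB aS bS cab | sep].
  by apply: nex; apply/existsP; exists a; apply/existsP; exists b; rewrite aA bB aS bS.
by case/existsP=> a /existsP[b /and5P[aA bB aS bS]]; apply: sep.
Qed.

Lemma separatesPn E A B S : ~~ separates E A B S ->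
  exists a b, [/\ a \in A, b \in B, a \notin S, b \notin S & connect (avoid E S) a b].
Proof. by rewrite negbK => /existsP[a /existsP[b /and5P[]]]; exists a, b. Qed.

Lemma separatesC E A B S : separates E A B S = separates E B A S.
Proof.
by apply/separatesP/separatesP=> sep a b aA bB aS bS; rewrite connect_avoidC; apply: sep.
Qed.

Definition separators_ge E A B k := forall S, separates E A B S -> k <= #|S|.

Definition vdisjoint : rel (seq T) := fun p q => [disjoint p & q].

Lemma vdisjointP p q : reflect (forall v, v \in p -> v \in q -> False) (vdisjoint p q).
Proof.
rewrite /vdisjoint disjoint_has; apply: (iffP hasPn) => dpq v vp.
  by move/negP: (dpq v vp).
by apply/negP; apply: dpq.
Qed.

Lemma vdisjoint_sym : symmetric vdisjoint.
Proof. by move=> p q; apply: disjoint_sym. Qed.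

Definition abpath E A B p : bool :=
  if p is a :: t then [&& path (adj E) a t, a \in A, last a t \in B & uniq p] else false.

Definition linkage E A B k (ps : seq (seq T)) :=
  [/\ size ps = k, all (abpath E A B) ps & pairwise vdisjoint ps].

Lemma linkage_sub E F A B k ps : E \subset F -> linkage E A B k ps -> linkage F A B k ps.
Proof.
move=> EF [size_ps /allP abps disj_ps]; split=> //; apply/allP=> -[|a t] /abps //=.
by case/andP=> pt ->; rewrite (sub_path (adj_sub EF) pt).
Qed.

Lemma linkage_set0 A B k : separators_ge set0 A B k -> exists ps, linkage set0 A B k ps.
Proof.
move=> sepk; have: k <= #|A :&: B|.
  apply/sepk/separatesP=> a b aA bB aAB _ /connectP[[|w p] /=].
    by move=> _ eab; rewrite inE aA -eab bB in aAB.
  by rewrite /avoid /adj inE.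
rewrite cardE => le_k; exists [seq [:: v] | v <- take k (enum (A :&: B))]; split.
- by rewrite size_map size_takel.
- apply/allP=> _ /mapP[v /mem_take + ->].
  by rewrite mem_enum inE /= => /andP[-> ->].
- rewrite pairwise_map; have: uniq (take k (enum (A :&: B))) by exact/take_uniq/enum_uniq.
  rewrite uniq_pairwise; apply: sub_pairwise => v w /= vw.
  by rewrite /vdisjoint disjoint_cons disjoint_has /= !inE vw.
Qed.

Lemma path_prefix_hit (e : rel T) X a t : path e a t -> last a t \in X ->
  exists n, [/\ path e a (take n t), last a (take n t) \in X
              & all [pred v | v \notin X] (belast a (take n t))].
Proof.
elim: t a => [|b t IHt] a /=; first by exists 0.
case/andP=> eab pt lX; have [aX|aX] := boolP (a \in X); first by exists 0.
have [n [pn ln bn]] := IHt b pt lX.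
by exists n.+1 => /=; rewrite eab pn ln aX bn.
Qed.

Lemma path_suffix_hit (e : rel T) X a t : path e a t -> (a \in X) || has (mem X) t ->
  exists n a' t', [/\ drop n (a :: t) = a' :: t', path e a' t', a' \in X,
                    last a' t' = last a t & all [pred v | v \notin X] t'].
Proof.
elim: t a => [|b t IHt] a /=; first by rewrite orbF => _ aX; exists 0, a, [::].
case/andP=> eab pt; have [hit _|] := boolP ((b \in X) || has (mem X) t).
  by have [n [a' [t' [dn pt' a'X lt' nt']]]] := IHt b pt hit; exists n.+1, a', t'.
rewrite negb_or orbF => /andP[bX /hasPn tX] aX; exists 0, a, (b :: t).
by rewrite /= eab pt aX bX; split=> //; apply/allP=> v /tX.
Qed.

Lemma linkage_shrink E A B k ps (P : pred (seq T)) :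
  (forall p, abpath E A B p -> exists2 p', abpath E A B p' && P p' & {subset p' <= p}) ->
  linkage E A B k ps -> exists ps', linkage E A B k ps' /\ all P ps'.
Proof.
move=> shrink [size_ps /allP abps disj_ps].
have f_spec p : exists p', abpath E A B p ==> [&& abpath E A B p', P p' & all (mem p) p'].
  have [/shrink[p' /andP[abp' Pp'] sub_p']|_] := boolP (abpath E A B p); last by exists p.
  by exists p'; rewrite abp' Pp'; apply/allP.
pose f p := xchoose (f_spec p).
have fP p : p \in ps -> [&& abpath E A B (f p), P (f p) & all (mem p) (f p)].
  by move=> pps; apply: implyP (xchooseP (f_spec p)) _; apply: abps.
exists (map f ps); split; first split.
- by rewrite size_map.
- by apply/allP=> _ /mapP[p /fP /and3P[? _ _] ->].
- rewrite pairwise_map; apply: (sub_in_pairwise (P := mem ps) _ _ disj_ps); last exact/allP.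
  move=> p q /fP /and3P[_ _ /allP fp] /fP /and3P[_ _ /allP fq] /vdisjointP dpq.
  by apply/vdisjointP=> v /fp vp /fq vq; apply: dpq vp vq.
- by apply/allP=> _ /mapP[p /fP /and3P[_ ? _] ->].
Qed.

Definition meets_only_at_end X p :=
  if p is a :: t then all [pred v | v \notin X] (belast a t) else false.

Definition meets_only_at_start X p :=
  if p is a :: t then all [pred v | v \notin X] t else false.

Lemma linkage_trim_end E A B k ps : linkage E A B k ps ->
  exists ps', linkage E A B k ps' /\ all (meets_only_at_end B) ps'.
Proof.
apply: linkage_shrink => -[|a t] //= /and4P[pt aA lB uat].
have [n [pn ln bn]] := path_prefix_hit pt lB.
exists (a :: take n t).
  by move: (take_uniq n.+1 (uat : uniq (a :: t))); rewrite /= pn aA ln bn => ->.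
by move=> v; rewrite !inE => /predU1P[->|/mem_take->]; rewrite ?eqxx ?orbT.
Qed.

Lemma linkage_trim_start E A B k ps : linkage E A B k ps ->
  exists ps', linkage E A B k ps' /\ all (meets_only_at_start A) ps'.
Proof.
apply: linkage_shrink => -[|a t] //= /and4P[pt aA lB uat].
have [|n [a' [t' [dn pt' a'A lt' nt']]]] := path_suffix_hit pt (_ : (a \in A) || _).
  by rewrite aA.
exists (a' :: t'); last by move=> v; rewrite -dn => /mem_drop.
have := drop_uniq n (uat : uniq (a :: t)).
by rewrite dn /= pt' a'A lt' lB nt' => ->.
Qed.

Lemma separators_geC E A B k : separators_ge E A B k -> separators_ge E B A k.
Proof. by move=> sepk S; rewrite separatesC; apply: sepk. Qed.

Lemma separators_ge_del_edge E x y A B Y k b0 :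
  separators_ge E A B k -> separates (E :\ [set x; y]) A B Y ->
  b0 \in B -> b0 \notin Y -> connect (avoid (E :\ [set x; y]) Y) y b0 ->
  separators_ge (E :\ [set x; y]) A (x |: Y) k.
Proof.
set E' := E :\ _ => sepk /separatesP sepY b0B b0Y cyb S /separatesP sepS.
apply/sepk/separatesP=> a b aA bB aS bS cab.
have unreach z : z \in x |: Y -> ~ connect (avoid E' S) a z.
  by move=> zX caz; apply: sepS aA zX aS (connect_avoid_notin caz aS) caz.
have [aY|aY] := boolP (a \in Y); first by apply: (unreach a); rewrite ?setU1r ?connect0.
have avoidY c : connect (avoid E' S) a c -> connect (avoid E' Y) a c.
  move=> cac; apply/negPn/negP=> ncY; have [z zY caz] := connect_avoid_meet cac ncY.
  by apply: unreach caz; rewrite setU1r.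
have [cab'|[[cax _]|[cay _]]] := connect_avoidD1 x y cab.
- have [bY|bY] := boolP (b \in Y); first by apply: (unreach b); rewrite ?setU1r.
  exact: sepY aA bB aY bY (avoidY b cab').
- exact: unreach (setU11 x Y) cax.
- exact: sepY aA b0B aY b0Y (connect_trans (avoidY y cay) cyb).
Qed.

Lemma pairwise_sym_mem (U : eqType) (r : rel U) (s : seq U) u v : symmetric r ->
  pairwise r s -> u \in s -> v \in s -> u != v -> r u v.
Proof.
move=> rC; elim: s => //= w s IHs /andP[/allP rw rs].
rewrite !inE => /predU1P[->|us] /predU1P[->|vs]; rewrite ?eqxx // => uv.
- exact: rw.
- by rewrite rC; apply: rw.
- exact: IHs rs us vs uv.
Qed.

Lemma linkage_from_each E X B k ps : linkage E X B k ps -> #|X| <= k ->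
  forall u, u \in X -> exists s, u :: s \in ps.
Proof.
case=> size_ps /allP abps disj_ps leXk u uX.
pose hs := [seq head u q | q <- ps].
have hsX : {subset hs <= X}.
  by move=> _ /mapP[[|a t] /abps //= /and4P[_ aX _ _] ->].
have uniq_hs : uniq hs.
  rewrite uniq_pairwise pairwise_map.
  apply: (sub_in_pairwise (P := mem ps) _ _ disj_ps); last exact/allP.
  move=> p q /abps + /abps + /vdisjointP dq.
  case: p q dq => [|a t] [|a' t'] //= dq _ _.
  by apply/eqP=> aa'; apply: (dq a); rewrite ?aa' mem_head.
have /subset_cardP eqX : #|hs| = #|X|.
  apply/eqP; rewrite eqn_leq subset_leq_card; last exact/subsetP.
  by rewrite (card_uniqP uniq_hs) size_map size_ps.
have := uX; rewrite -(eqX (introT subsetP hsX)) => /mapP[[|a t] /[dup] qps /abps //= _ ->].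
by exists t.
Qed.

Section Glue.
Variables (E : {set {set T}}) (x y : T) (A B Y : {set T}) (k : nat) (a0 b0 : T).
Variables ps1 ps2 : seq (seq T).
Let E' := E :\ [set x; y].
Let X1 := x |: Y.
Let X2 := y |: Y.
Let R := avoid E' Y.
Hypotheses (Exy : [set x; y] \in E) (sepY : separates E' A B Y) (ltYk : #|Y| < k).
Hypotheses (a0A : a0 \in A) (a0Y : a0 \notin Y) (cax : connect R a0 x).
Hypotheses (b0B : b0 \in B) (b0Y : b0 \notin Y) (cyb : connect R y b0).
Hypotheses (L1 : linkage E' A X1 k ps1) (tight1 : all (meets_only_at_end X1) ps1).
Hypotheses (L2 : linkage E' X2 B k ps2) (tight2 : all (meets_only_at_start X2) ps2).

Let A_side v := exists2 a, (a \in A) && (a \notin Y) & connect R a v.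
Let B_side v := exists2 b, (b \in B) && (b \notin Y) & connect R v b.

Lemma sides_disjoint v : A_side v -> B_side v -> False.
Proof.
move=> [a /andP[aA aY] cav] [b /andP[bB bY] cvb].
exact: (elimT (separatesP _ _ _ _) sepY) aA bB aY bY (connect_trans cav cvb).
Qed.

Lemma B_side_notin v : B_side v -> v \notin Y.
Proof.
by move=> [b /andP[_ bY] cvb]; apply: contra bY => vY; rewrite (connect_avoid_mem cvb vY).
Qed.

Lemma X1_side u : u \in X1 -> A_side u \/ u \in Y.
Proof. by rewrite in_setU1 => /predU1P[->|]; [left; exists a0; rewrite ?a0A | right]. Qed.

Lemma ps1_side p v : p \in ps1 -> v \in p -> A_side v \/ v \in Y.
Proof.
case: L1 => _ /allP ab1 _ pin; move: (ab1 p pin) (allP tight1 p pin).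
case: p {pin} => [|a t] //; case/lastP: t => [|t l] /=.
  by case/and3P=> _ aX _ _; rewrite inE => /eqP->; apply: X1_side.
rewrite rcons_path last_rcons belast_rcons => /and4P[/andP[pt _] aA lX _] nX.
rewrite -rcons_cons mem_rcons inE => /predU1P[->|vat]; first exact: X1_side.
have notY : all [pred w | w \notin Y] (a :: t).
  by apply: all_notin_subset nX => w; apply: setU1r.
left; exists a; first by rewrite aA; exact: (allP notY a (mem_head _ _)).
exact: path_connect (path_avoid pt notY) _ vat.
Qed.

Lemma ps2_tail_side q v : q \in ps2 -> v \in behead q -> B_side v.
Proof.
case: L2 => _ /allP ab2 _ qin; move: (ab2 q qin) (allP tight2 q qin).
case: q {qin} => [|u [|s1 s]] //= /and4P[/andP[_ ps] _ lB _] nX vs.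
have notY : all [pred w | w \notin Y] (s1 :: s).
  by apply: all_notin_subset (nX : all _ (s1 :: s)) => w; apply: setU1r.
have pR := path_avoid ps notY.
exists (last s1 s); first by rewrite lB; exact: (allP notY _ (mem_last s1 s)).
apply: connect_trans (path_connect pR (mem_last s1 s)).
by rewrite connect_avoidC; apply: path_connect pR _ vs.
Qed.

Lemma y_notin_Y : y \notin Y.
Proof. by apply: contra b0Y => yY; rewrite (connect_avoid_mem cyb yY). Qed.

Let path_from u := nth [::] ps2 (find (fun q => ohead q == Some u) ps2).

Lemma path_fromP u : u \in X2 -> exists s,
  [/\ path_from u = u :: s, u :: s \in ps2, path (adj E') u s,
      last u s \in B & uniq (u :: s)].
Proof.
move=> uX; case: (L2) => _ /allP ab2 _.
have leX2k : #|X2| <= k by rewrite cardsU1 y_notin_Y add1n.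
have [s0 us0] := linkage_from_each L2 leX2k uX.
have has_u : has (fun q => ohead q == Some u) ps2 by apply/hasP; exists (u :: s0).
have qin : path_from u \in ps2 by apply: mem_nth; rewrite -has_find.
have := nth_find [::] has_u; rewrite -/(path_from u).
case: (path_from u) qin => [|u' s] // qin /eqP[<-]; exists s.
by case/and4P: (ab2 _ qin).
Qed.

(* The continuation of a path of ps1 ending at u: across the edge xy and along the
   path of ps2 from y when u = x, and along the path of ps2 from u otherwise. *)
Let cont u := if u == x then path_from y else behead (path_from u).

Lemma cont_B_side u v : u \in X1 -> v \in cont u -> B_side v.
Proof.
rewrite /cont in_setU1; case: eqP => [_ _|_ /= uY].
  have [s [-> qin _ _ _]] := path_fromP (setU11 y Y).
  rewrite inE => /predU1P[->|vs]; first by exists b0; rewrite ?b0B.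
  exact: ps2_tail_side qin vs.
have [s [qe qin _ _ _]] := path_fromP (setU1r y uY).
by rewrite qe => vs; apply: ps2_tail_side qin vs.
Qed.

Lemma ps1_cont_disjoint p u : p \in ps1 -> u \in X1 -> vdisjoint p (cont u).
Proof.
move=> pin uX; apply/vdisjointP=> v vp /(cont_B_side uX) Bv.
case: (ps1_side pin vp) => [Av|vY]; first exact: sides_disjoint Av Bv.
by move: (B_side_notin Bv); rewrite vY.
Qed.

Lemma cont_path u : u \in X1 ->
  [/\ path (adj E) u (cont u), last u (cont u) \in B & uniq (cont u)].
Proof.
have adjE := adj_sub (subD1set E [set x; y]).
rewrite /cont in_setU1; case: eqP => [->|_ /= uY].
  have [s [-> _ ps lB us]] := path_fromP (setU11 y Y).
  by rewrite /= (sub_path adjE ps) andbT.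
have [s [-> _ ps lB /andP[_ us]]] := path_fromP (setU1r y uY).
by rewrite /= (sub_path adjE ps).
Qed.

Lemma cont_disjoint u u' : u \in X1 -> u' \in X1 -> u != u' -> vdisjoint (cont u) (cont u').
Proof.
move=> uX u'X uu'; pose w z := if z == x then y else z.
have wX z : z \in X1 -> w z \in X2.
  by rewrite /w in_setU1; case: eqP => [_ _|_ /= zY]; rewrite ?setU11 ?setU1r.
have cont_sub z : z \in X1 -> {subset cont z <= path_from (w z)}.
  move=> /wX; rewrite /cont /w; case: (z == x) => /path_fromP[s [-> _ _ _ _]] v //= vs.
  by rewrite inE vs orbT.
have ww' : w u != w u'.
  move: uX u'X uu'; rewrite /w !in_setU1.
  case: eqP => [->|_] /= uY; case: eqP => [->|_] /= u'Y; rewrite ?eqxx // => _.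
  - by apply: contraNneq y_notin_Y => ->.
  - by apply: contraNneq y_notin_Y => <-.
have [s [qe qin _ _ _]] := path_fromP (wX u uX).
have [s' [qe' qin' _ _ _]] := path_fromP (wX u' u'X).
have /vdisjointP dq : vdisjoint (w u :: s) (w u' :: s').
  apply: (pairwise_sym_mem vdisjoint_sym _ qin qin'); first by case: L2.
  by apply: contraNneq ww' => -[-> _].
apply/vdisjointP=> v /(cont_sub _ uX) vq /(cont_sub _ u'X) vq'.
by apply: (dq v); rewrite -?qe -?qe'.
Qed.

Lemma linkage_through_edge : exists ps, linkage E A B k ps.
Proof.
exists [seq p ++ cont (last x p) | p <- ps1]; case: (L1) => size1 /allP ab1 disj1.
have last1 p : p \in ps1 -> last x p \in X1 /\ last x p \in p.
  by case: p => [|a t] /ab1 //= /and4P[_ _ lX _]; rewrite mem_last.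
split; first by rewrite size_map.
- apply/allP=> _ /mapP[p pin ->]; have [uX _] := last1 p pin.
  have [pc lc uc] := cont_path uX.
  move: (ab1 p pin) (ps1_cont_disjoint pin uX) pc lc uc.
  case: p {pin uX} => [|a t] //= /and4P[pt aA _ uat] dpc pc lc uc.
  rewrite cat_path (sub_path (adj_sub (subD1set E [set x; y])) pt) pc aA last_cat lc /=.
  move: dpc; rewrite /vdisjoint disjoint_sym disjoint_has => nh.
  change (uniq ((a :: t) ++ cont (last a t))).
  by rewrite cat_uniq (uat : uniq (a :: t)) nh uc.
- rewrite pairwise_map; apply: (sub_in_pairwise (P := mem ps1) _ _ disj1); last exact/allP.
  move=> p p' pin p'in dpp'; have [uX up] := last1 p pin; have [u'X u'p] := last1 p' p'in.
  have uu' : last x p != last x p'.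
    by apply: contraTneq dpp' => eu; apply/negP=> /vdisjointP D; apply: (D _ up); rewrite eu.
  apply/vdisjointP=> v; rewrite !mem_cat => /orP[vp|vc] /orP[vp'|vc'].
  + exact: (elimT (vdisjointP _ _) dpp') v vp vp'.
  + exact: (elimT (vdisjointP _ _) (ps1_cont_disjoint pin u'X)) v vp vc'.
  + exact: (elimT (vdisjointP _ _) (ps1_cont_disjoint p'in uX)) v vp' vc.
  + exact: (elimT (vdisjointP _ _) (cont_disjoint uX u'X uu')) v vc vc'.
Qed.

End Glue.

Lemma menger_step E x y A B Y k a0 b0 :
  let E' := E :\ [set x; y] in
  (forall A B k, separators_ge E' A B k -> exists ps, linkage E' A B k ps) ->
  [set x; y] \in E -> separators_ge E A B k -> separates E' A B Y -> #|Y| < k ->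
  a0 \in A -> a0 \notin Y -> connect (avoid E' Y) a0 x ->
  b0 \in B -> b0 \notin Y -> connect (avoid E' Y) y b0 ->
  exists ps, linkage E A B k ps.
Proof.
move=> E' IH Exy sepk sepY ltYk a0A a0Y cax b0B b0Y cyb.
have [ps1 [L1 tight1]] :
    exists ps1, linkage E' A (x |: Y) k ps1 /\ all (meets_only_at_end (x |: Y)) ps1.
  have [ps L] := IH _ _ _ (separators_ge_del_edge sepk sepY b0B b0Y cyb).
  exact: linkage_trim_end L.
have E'C : E' = E :\ [set y; x] by rewrite /E' setUC.
have sep2 : separators_ge E' (y |: Y) B k.
  apply: separators_geC; rewrite E'C.
  apply: separators_ge_del_edge (separators_geC sepk) _ a0A a0Y _.
    by rewrite -E'C separatesC.
  by rewrite -E'C connect_avoidC.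
have [ps2 [L2 tight2]] :
    exists ps2, linkage E' (y |: Y) B k ps2 /\ all (meets_only_at_start (y |: Y)) ps2.
  have [ps L] := IH _ _ _ sep2; exact: linkage_trim_start L.
exact: linkage_through_edge Exy sepY ltYk a0A a0Y cax b0B b0Y cyb L1 tight1 L2 tight2.
Qed.

Theorem menger E A B k : simple_graph E -> separators_ge E A B k ->
  exists ps, linkage E A B k ps.
Proof.
have [n] := ubnP #|E|; elim: n E A B k => // n IHn E A B k ltEn sE sepk.
have [E0|[e eE]] := set_0Vmem E; first by move: sepk; rewrite E0; apply: linkage_set0.
have /cards2P[x [y [_ exy]]] : #|e| == 2 by rewrite sE.
move: eE; rewrite {e}exy => Exy; set E' := E :\ [set x; y].
have IH A' B' k' : separators_ge E' A' B' k' -> exists ps, linkage E' A' B' k' ps.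
  apply: IHn; last exact: simple_graph_sub (subD1set E _) sE.
  by rewrite -ltnS (leq_trans _ ltEn) // ltnS (cardsD1 [set x; y] E) Exy.
have [/existsP[Y /andP[sepY ltYk]]|noY] :=
  boolP [exists Y, separates E' A B Y && (#|Y| < k)]; last first.
  have [ps L] : exists ps, linkage E' A B k ps.
    apply: IH => S sepS; rewrite leqNgt; apply: contra noY => ltSk.
    by apply/existsP; exists S; rewrite sepS.
  by exists ps; apply: linkage_sub L; apply: subD1set.
have /separatesPn[a0 [b0 [a0A b0B a0Y b0Y ca0b0]]] : ~~ separates E A B Y.
  by apply: contraL ltYk => /sepk; rewrite leqNgt.
have [ca0b0'|[[cax cyb]|[cay cxb]]] := connect_avoidD1 x y ca0b0.
- by case: (elimT (separatesP _ _ _ _) sepY a0 b0 a0A b0B a0Y b0Y ca0b0').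
- exact: menger_step IH Exy sepk sepY ltYk a0A a0Y cax b0B b0Y cyb.
- rewrite /E' (setUC [set x]) in IH sepY cay cxb Exy.
  exact: menger_step IH Exy sepk sepY ltYk a0A a0Y cay b0B b0Y cxb.
Qed.

(** * Internally disjoint paths *)

Lemma is_path_sub E F x y p : E \subset F -> is_path E x y p -> is_path F x y p.
Proof. by move=> EF [pp lp up]; split=> //; exact: (sub_path (adj_sub EF) pp). Qed.

(* [rs] lists the interiors of [m] internally disjoint x-y paths. *)
Definition disjoint_paths F x y m (rs : seq (seq T)) :=
  [/\ size rs = m, uniq rs, pairwise vdisjoint rs
    & forall r, r \in rs -> is_path F x y (rcons r y)].

Definition del_ends F x y := [set e in F | (x \notin e) && (y \notin e)].

Lemma del_ends_sub F x y : del_ends F x y \subset F.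
Proof. by apply/subsetP=> e; rewrite inE => /andP[]. Qed.

Lemma adj_del_ends F x y u v :
  adj (del_ends F x y) u v = [&& adj F u v, u != x, u != y, v != x & v != y].
Proof.
rewrite /adj inE !in_set2 !negb_or (eq_sym x u) (eq_sym x v) (eq_sym y u) (eq_sym y v).
by case: ([set u; v] \in F); case: (u == x); case: (u == y); case: (v == x); case: (v == y).
Qed.

Lemma nbhd_separators_ge F x y m : x != y -> ~~ adj F x y ->
  (forall S, #|S| < m -> x \notin S -> y \notin S -> connect (avoid F S) x y) ->
  separators_ge (del_ends F x y) [set v | adj F x v] [set v | adj F y v] m.
Proof.
move=> xy nxy hc S /separatesP sepS; rewrite leqNgt; apply/negP=> ltSm.
set S' := S :\: [set x; y].
have /connectP[p0 pp0 ly] : connect (avoid F S') x y.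
  apply: hc; first exact: leq_ltn_trans (subset_leq_card (subsetDl _ _)) ltSm.
    by rewrite inE set21.
  by rewrite inE set22.
move: ly; case/shortenP: pp0 => -[|v1 q] /= + + _.
  by move=> _ _ yx; rewrite yx eqxx in xy.
case/lastP: q => [|q l] /andP[/and3P[xv1 _ v1S] pq] uq.
  by move=> /= yv1; move: nxy; rewrite yv1 xv1.
rewrite last_rcons => yl; subst l.
have : uniq (rcons (x :: v1 :: q) y) by exact: uq.
rewrite rcons_uniq => /andP[yxq /andP[xq _]].
move: pq; rewrite rcons_path => /andP[pq /and3P[qy _ _]].
have notS' : all [pred w | w \notin S'] (v1 :: q).
  by rewrite /= v1S (path_succ_all _ pq) // => u w /and3P[].
have ends : all [pred w | [&& w != x, w != y & w \notin S]] (v1 :: q).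
  apply/allP=> w wq; have wx : w != x by apply: contraNneq xq => <-.
  have wy : w != y by apply: contraNneq yxq => <-; rewrite in_cons wq orbT.
  by move: (allP notS' w wq); rewrite /= /S' !inE (negPf wx) (negPf wy).
have pS : path (avoid (del_ends F x y) S) v1 q.
  apply: (sub_in_path _ ends pq) => u w /and3P[ux uy uS] /and3P[wx wy wS] /and3P[Fuw _ _].
  by rewrite /avoid adj_del_ends Fuw ux uy wx wy uS wS.
apply: (sepS v1 (last v1 q)).
- by rewrite inE.
- by rewrite inE adj_sym.
- by case/and3P: (allP ends v1 (mem_head _ _)).
- by case/and3P: (allP ends _ (mem_last v1 q)).
- exact: (path_connect pS (mem_last v1 q)).
Qed.

Lemma pairwise_vdisjoint_uniq (ps : seq (seq T)) :
  pairwise vdisjoint ps -> [::] \notin ps -> uniq ps.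
Proof.
move=> disj_ps nil_ps; rewrite uniq_pairwise.
apply: (sub_in_pairwise (P := mem ps) _ _ disj_ps); last exact/allP.
move=> [|a p] q /= pps _ /vdisjointP dpq; first by rewrite pps in nil_ps.
by apply/eqP=> epq; apply: (dpq a); rewrite -?epq mem_head.
Qed.

Lemma simple_adj_neq F u v : simple_graph F -> adj F u v -> u != v.
Proof. by move=> sF /sF; case: eqP => [->|//]; rewrite setUid cards1. Qed.

Lemma local_menger F x y m : simple_graph F -> x != y -> ~~ adj F x y ->
  (forall S, #|S| < m -> x \notin S -> y \notin S -> connect (avoid F S) x y) ->
  exists rs, disjoint_paths F x y m rs.
Proof.
move=> sF xy nxy hc; set F' := del_ends F x y.
have sF' : simple_graph F' := simple_graph_sub (del_ends_sub F x y) sF.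
have [ps [size_ps /allP abps disj_ps]] := menger sF' (nbhd_separators_ge xy nxy hc).
exists ps; split=> //.
  by apply: pairwise_vdisjoint_uniq => //; apply/negP=> nil_ps; have := abps _ nil_ps.
move=> [|a t] /abps //=; rewrite !inE => /and4P[pt xa ly uat].
have ends_t : all [pred w | (w != x) && (w != y)] t.
  apply: path_succ_all pt => u v; rewrite /F' adj_del_ends.
  by case/and5P=> _ _ _ vx vy; rewrite /= vx vy.
have ends : all [pred w | (w != x) && (w != y)] (a :: t).
  rewrite /= ends_t eq_sym (simple_adj_neq sF xa) andbT /=.
  by apply: contraNneq nxy => <-.
have F'F := adj_sub (del_ends_sub F x y).
split; first by rewrite /= xa rcons_path (sub_path F'F pt) adj_sym ly.
  by rewrite /= last_rcons.
change (uniq (rcons (x :: a :: t) y)).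
rewrite rcons_uniq cons_uniq (uat : uniq (a :: t)) andbT in_cons negb_or eq_sym xy /=.
by apply/andP; split; apply/negP=> /(allP ends) /andP[]; rewrite eqxx.
Qed.

Lemma kconnected_connectD1 F k x y S : kconnected k F -> x != y ->
  #|S| < k.-1 -> x \notin S -> y \notin S -> connect (avoid (F :\ [set x; y]) S) x y.
Proof.
move=> [kT hc] xy ltS xS yS; set F' := F :\ [set x; y].
have /set0Pn[z] : ~: (S :|: [set x; y]) != set0.
  rewrite -card_gt0; have := cardsC (S :|: [set x; y]).
  have := leq_of_leqif (leq_card_setU S [set x; y]); rewrite cards2 xy; lia.
rewrite in_setC in_setU in_set2 !negb_or => /andP[zS /andP[zx zy]].
have lift w : w \in [set x; y] -> subrel (avoid F (w |: S)) (connect (avoid F' S)).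
  move=> wxy u v /and3P[Fuv]; rewrite !in_setU1 !negb_or => /andP[uw uS] /andP[vw vS].
  apply: connect1; rewrite /avoid uS vS /adj in_setD1 (Fuv : [set u; v] \in F) !andbT.
  apply/negP=> /eqP e; move: wxy; rewrite -e in_set2.
  by rewrite eq_sym (negPf uw) eq_sym (negPf vw).
have czy : connect (avoid F (x |: S)) z y.
  apply: hc; first by rewrite cardsU1 xS add1n.
    by rewrite in_setU1 negb_or zx zS.
  by rewrite in_setU1 negb_or eq_sym xy yS.
have czx : connect (avoid F (y |: S)) z x.
  apply: hc; first by rewrite cardsU1 yS add1n.
    by rewrite in_setU1 negb_or zy zS.
  by rewrite in_setU1 negb_or xy xS.
apply: (@connect_trans _ _ z); last exact: connect_sub (lift x (set21 x y)) _ _ czy.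
by rewrite connect_avoidC; apply: connect_sub (lift y (set22 x y)) _ _ czx.
Qed.

Lemma kconnected_disjoint_paths F k x y : simple_graph F -> kconnected k F -> 0 < k ->
  x != y -> exists rs, disjoint_paths F x y k rs.
Proof.
move=> sF kF k0 xy; have [_ hc] := kF.
have [Fxy|nFxy] := boolP (adj F x y); last first.
  by apply: local_menger => // S ltSk; apply: hc; rewrite -ltnS prednK.
set F' := F :\ [set x; y].
have nF'xy : ~~ adj F' x y by rewrite /adj in_setD1 eqxx.
have [rs [size_rs uniq_rs disj_rs prs]] : exists rs, disjoint_paths F' x y k.-1 rs.
  apply: local_menger => //; first exact: simple_graph_sub (subD1set F _) sF.
  by move=> S; apply: kconnected_connectD1.
exists ([::] :: rs); split.
- by rewrite /= size_rs prednK.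
- by rewrite /= uniq_rs andbT; apply/negP=> /prs[/= /andP[]]; rewrite (negPf nF'xy).
- by rewrite /= disj_rs andbT; apply/allP=> r _; rewrite /vdisjoint disjoint_has.
- move=> r; rewrite inE => /predU1P[->|/prs]; last exact/is_path_sub/subD1set.
  by split=> //=; rewrite ?Fxy // inE andbT.
Qed.

Lemma k_mono_paths_const F k x y rs (col : nat) : disjoint_paths F x y k rs ->
  k_mono_paths k F (fun _ => col) x y.
Proof.
case=> size_rs uniq_rs disj_rs prs; exists (map (rcons^~ y) rs); split.
- by rewrite size_map.
- by rewrite map_inj_uniq //; apply: rcons_injl.
- move=> _ /mapP[r /prs pr ->]; split=> //; exists col.
  by case: pr => pp _ _; apply: sub_path pp => u v _; rewrite /= eqxx.
- move=> i j /andP[ij]; rewrite size_map => jr; have ir := ltn_trans ij jr.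
  rewrite !(nth_map [::]) // /internal !belast_rcons /=.
  by move/(pairwiseP [::]): disj_rs; apply.
Qed.

Lemma mono_kconn_const F k (col : nat) : simple_graph F -> kconnected k F -> 0 < k ->
  mono_kconn_colouring k F (fun _ => col).
Proof.
move=> sF kF k0 x y xy; have [rs] := kconnected_disjoint_paths sF kF k0 xy.
exact: k_mono_paths_const.
Qed.

(** * Colourings *)

Lemma kconnected_neq0 F k : kconnected k F -> 0 < k -> F != set0.
Proof.
case=> kT hc k0; have /card_gt1P[x [y [_ _ xy]]] : 1 < #|T| by lia.
have := hc set0; rewrite cards0 => /(_ isT x y); rewrite !in_set0 => /(_ isT isT).
case/connectP=> [[|w p]] /=; first by move=> _ e; rewrite e eqxx in xy.
by case/andP=> /and3P[Fxw _ _] _ _; apply/set0Pn; exists [set x; w].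
Qed.

Lemma ncolours_const F (col : nat) : F != set0 -> ncolours F (fun _ => col) = 1.
Proof.
rewrite -card_gt0 cardE /ncolours; case: (enum F) => [|e s] //= _.
by elim: s => //= _ s; rewrite inE eqxx.
Qed.

Lemma ncolours_le_card F c : ncolours F c <= #|F|.
Proof. by rewrite cardE /ncolours (leq_trans (size_undup _)) ?size_map. Qed.

Lemma mc_ge F k c : mono_kconn_colouring k F c -> ncolours F c <= mc k F.
Proof.
move=> c_mono; have lt : ncolours F c < #|F|.+1 by rewrite ltnS ncolours_le_card.
apply: (@leq_bigmax_cond _ _ (fun n : 'I_#|F|.+1 => nat_of_ord n) (Ordinal lt)).
by apply/asboolP; exists c.
Qed.

Lemma mc_attained F k c : mono_kconn_colouring k F c ->
  exists c', mono_kconn_colouring k F c' /\ ncolours F c' = mc k F.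
Proof.
move=> c_mono; have lt : ncolours F c < #|F|.+1 by rewrite ltnS ncolours_le_card.
have Pc : `[< exists c', mono_kconn_colouring k F c' /\ ncolours F c' = Ordinal lt >].
  by apply/asboolP; exists c.
rewrite /mc (bigmax_eq_arg _ Pc); case: arg_maxnP => // i /asboolP[c' [c'_mono <-]] _.
by exists c'.
Qed.

Definition extend_colouring E F (c : {set T} -> nat) : {set T} -> nat :=
  fun e => if e \in F then c e else (\max_(f in F) c f).+1 + index e (enum (E :\: F)).

Lemma ncolours_extend E F c : F \subset E ->
  ncolours F c + #|E :\: F| <= ncolours E (extend_colouring E F c).
Proof.
move=> FE; set N := (\max_(f in F) c f).+1.
set U1 := undup [seq c f | f <- enum F].
set U2 := [seq extend_colouring E F c f | f <- enum (E :\: F)].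
have U1lt v : v \in U1 -> v < N.
  by rewrite mem_undup => /mapP[f]; rewrite mem_enum ltnS => fF ->; apply: leq_bigmax_cond.
have U2ge v : v \in U2 -> N <= v.
  move=> /mapP[f]; rewrite mem_enum inE => /andP[fF _] ->.
  by rewrite /extend_colouring (negPf fF) leq_addr.
have uniq_U2 : uniq U2.
  rewrite map_inj_in_uniq ?enum_uniq // => f g.
  rewrite !mem_enum !inE => /andP[fF fE] /andP[gF gE].
  rewrite /extend_colouring (negPf fF) (negPf gF) => /addnI e.
  by rewrite -(nth_index f (_ : f \in enum (E :\: F))) ?e ?nth_index ?mem_enum ?inE ?fF ?gF.
have uniq_U : uniq (U1 ++ U2).
  rewrite cat_uniq undup_uniq uniq_U2 andbT; apply/hasPn=> v /U2ge Nv.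
  by apply/negP=> /U1lt; rewrite ltnNge Nv.
have <- : size (U1 ++ U2) = ncolours F c + #|E :\: F| by rewrite size_cat size_map -cardE.
apply: uniq_leq_size uniq_U _ => v; rewrite mem_cat mem_undup => /orP[].
  rewrite mem_undup => /mapP[f]; rewrite mem_enum => fF ->; apply/mapP; exists f.
    by rewrite mem_enum (subsetP FE).
  by rewrite /extend_colouring fF.
case/mapP=> f; rewrite !mem_enum inE => /andP[_ fE] ->.
by apply/mapP; exists f; rewrite ?mem_enum.
Qed.

Lemma mono_kconn_extend E F c k : F \subset E -> mono_kconn_colouring k F c ->
  mono_kconn_colouring k E (extend_colouring E F c).
Proof.
move=> FE c_mono x y xy; have [ps [size_ps uniq_ps pps disj_ps]] := c_mono x y xy.
exists ps; split=> // p /pps[pxy [col mp]]; split; first exact: is_path_sub FE pxy.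
exists col; case: pxy => pp _ _.
have: path [rel u v | adj F u v && (c [set u; v] == col)] x p by rewrite path_relI pp mp.
apply: sub_path => u v /andP[Fuv cuv].
by rewrite /= /extend_colouring (Fuv : [set u; v] \in F).
Qed.

Lemma mc_pos F k : simple_graph F -> kconnected k F -> 0 < k -> 0 < mc k F.
Proof.
move=> sF kF k0; rewrite -(ncolours_const 0 (kconnected_neq0 kF k0)).
exact: mc_ge (mono_kconn_const 0 sF kF k0).
Qed.

Lemma mc_le_hk E F k : min_spanning_kconn k E F -> mc k F <= hk k E.
Proof. by move=> minF; apply: (@leq_bigmax_cond _ _ (fun F => mc k F) F); apply/asboolP. Qed.

Lemma hk_pos E H k : simple_graph E -> min_spanning_kconn k E H -> 0 < k -> 0 < hk k E.
Proof.
move=> sE minH k0; have [HE kH _] := minH.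
exact: leq_trans (mc_pos (simple_graph_sub HE sE) kH k0) (mc_le_hk minH).
Qed.

Lemma hk_attained E F k : min_spanning_kconn k E F ->
  exists2 F', min_spanning_kconn k E F' & hk k E = mc k F'.
Proof.
move=> minF; rewrite /hk (bigmax_eq_arg F); last exact/asboolP.
by case: arg_maxnP => [|F' /asboolP minF' _]; [exact/asboolP | exists F'].
Qed.

End Graphs.

Theorem mainTheorem1 (T : finType) (E : {set {set T}}) (k : nat) :
  2 <= k -> simple_graph E -> kconnected k E ->
  forall H : {set {set T}}, min_spanning_kconn k E H ->
    nedges E - nedges H + hk k E <= mc k E /\
    nedges E - nedges H + 1 <= nedges E - nedges H + hk k E.
Proof.
move=> k2 sE kE H minH; have k0 : 0 < k := ltnW k2.
split; last by rewrite leq_add2l (hk_pos sE minH k0).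
have [F [FE kF minF] ->] := hk_attained minH.
have eFH : #|F| = #|H| by case: minH => HE kH minH; apply/eqP; rewrite eqn_leq minF ?minH.
have [c [c_mono <-]] := mc_attained (mono_kconn_const 0 (simple_graph_sub FE sE) kF k0).
have dF : #|E :\: F| = #|E| - #|F| by rewrite cardsD (setIidPr FE).
rewrite /nedges -eFH -dF addnC.
exact: leq_trans (ncolours_extend c FE) (mc_ge (mono_kconn_extend FE c_mono)).
Qed.
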